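(* Let $G$ be a graph and $(A,B)$ a $2$-separation of $G$ with $A\cap B=\{x,y\}$. Let $X=\{a,b,c,d\}\subseteq V(G)$. If $x,y\in X$, one vertex of $X$ lies in $A\setminus\{x,y\}$ and the other lies in $B\setminus\{x,y\}$, then $G$ does not have an $L(X)$-minor.
   Context: A $2$-separation is a pair $(A,B)$ with $A\cup B=V(G)$, $|A\cap B|\le2$ and no edge between $A\setminus B$ and $B\setminus A$. The graph $L$ has vertices $v_1,\dots,v_8$ and edges $v_1v_2,v_1v_5,v_2v_7,v_2v_8,v_2v_3,v_3v_4,v_4v_5,v_4v_7,v_5v_6,v_6v_7,v_6v_8,v_7v_8$. An $L$-model in $G$ is a family $\{G_z:z\in V(L)\}$ of pairwise vertex-disjoint connected subgraphs of $G$ such that for each $zz'\in E(L)$ some vertex of $G_z$ is adjacent to some vertex of $G_{z'}$. $G$ has an $L(X)$-minor if there is an $L$-model and an injective map $\pi:X\to\{v_1,v_3,v_4,v_5\}$ with $u\in V(G_{\pi(u)})$ for all $u\in X$. *)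

From mathcomp Require Import all_boot.
Set Implicit Arguments. Unset Strict Implicit. Unset Printing Implicit Defensive.

Definition simple_graph (V : finType) (e : rel V) : Prop :=
  symmetric e /\ irreflexive e.

Definition two_separation (V : finType) (e : rel V) (A B : {set V}) : Prop :=
  [/\ A :|: B = [set: V], #|A :&: B| <= 2 &
      forall u v, u \in A :\: B -> v \in B :\: A -> ~~ e u v].

(* A connected
   subgraph of G is determined, for the purposes of models, by its vertex set
   S, and S spans a connected subgraph iff G[S] is connected. *)
Definition connected_in (V : finType) (e : rel V) (S : {set V}) : Prop :=
  S != set0 /\
  forall u v, u \in S -> v \in S ->
    connect [rel p q | [&& e p q, p \in S & q \in S]] u v.

(* The graph L on v_1..v_8, encoded as 'I_8 with v_i = i-1. *)
Definition L_edges : seq (nat * nat) :=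
  [:: (1,2); (1,5); (2,7); (2,8); (2,3); (3,4); (4,5); (4,7); (5,6); (6,7);
      (6,8); (7,8)].

Definition Ladj (z z' : 'I_8) : bool :=
  ((z.+1, z'.+1) \in L_edges) || ((z'.+1, z.+1) \in L_edges).

Definition Lv (i : nat) : 'I_8 := inord i.-1.

Definition L_model (V : finType) (e : rel V) (M : 'I_8 -> {set V}) : Prop :=
  [/\ forall z, connected_in e (M z),
      forall z z', z != z' -> [disjoint M z & M z'] &
      forall z z', Ladj z z' ->
        exists u v, [/\ u \in M z, v \in M z' & e u v]].

Definition has_LX_minor (V : finType) (e : rel V) (X : {set V}) : Prop :=
  exists (M : 'I_8 -> {set V}) (pi : V -> 'I_8),
    [/\ L_model e M,
        {in X &, injective pi},
        forall u, u \in X -> pi u \in [set Lv 1; Lv 3; Lv 4; Lv 5] &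
        forall u, u \in X -> u \in M (pi u)].

From mathcomp Require Import all_boot.
Set Implicit Arguments. Unset Strict Implicit. Unset Printing Implicit Defensive.

(* Outside {x, y} no edge crosses the separation, so every connected vertex set
   avoiding x and y lies on one side of it.  In an L(X)-model, x and y lie in
   the branch sets of two of the terminals v1, v3, v4, v5; all other branch
   sets avoid x and y.  In L, any terminal reaches v7 through non-terminals
   (v1, v3 via v2; v4 directly; v5 via v6), so the branch sets of the two
   remaining terminals, which contain the vertices of X on opposite sides of
   the separation, would have to lie on the same side. *)

Definition same_side (V : finType) (A S T : {set V}) : Prop :=
  {in S & T, forall a b, (a \in A) = (b \in A)}.

Lemma same_side_trans (V : finType) (A S T U : {set V}) :
  T != set0 -> same_side A S T -> same_side A T U -> same_side A S U.
Proof.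
by move=> /set0Pn[b bT] ST TU a c aS cU; rewrite (ST a b) // (TU b c).
Qed.

Definition Ladj_in (P : pred 'I_8) : rel 'I_8 :=
  [rel z z' | [&& P z, P z' & Ladj z z']].

Section TwoSeparation.

Variables (V : finType) (e : rel V) (A B : {set V}) (x y : V).
Hypotheses (e_sym : symmetric e) (sepAB : two_separation e A B)
  (AIB : A :&: B = [set x; y]).

Lemma sep_inB v : v \notin [set x; y] -> (v \in B) = (v \notin A).
Proof.
case: sepAB => AUB _ _ vxy.
have : v \in A :|: B by rewrite AUB inE.
rewrite inE; case vA: (v \in A); case vB: (v \in B) => //= _.
by move: vxy; rewrite -AIB inE vA vB.
Qed.

Lemma sep_edge_inA p q :
  p \notin [set x; y] -> q \notin [set x; y] -> e p q -> (p \in A) = (q \in A).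
Proof.
case: sepAB => _ _ noedge pxy qxy epq.
have inAB v : v \notin [set x; y] -> (v \in A :\: B) = (v \in A).
  by move=> vxy; rewrite inE sep_inB // negbK andbb.
have inBA v : v \notin [set x; y] -> (v \in B :\: A) = (v \notin A).
  by move=> vxy; rewrite inE sep_inB // andbb.
case pA: (p \in A); case qA: (q \in A) => //.
  by move: (noedge p q); rewrite inAB // inBA // pA qA epq => /(_ isT isT).
by move: (noedge q p); rewrite inAB // inBA // pA qA e_sym epq => /(_ isT isT).
Qed.

Lemma connected_sep_same_side S :
  connected_in e S -> [disjoint S & [set x; y]] -> same_side A S S.
Proof.
move=> [_ connS] Sxy a b aS bS.
apply: (closed_connect _ (connS a b aS bS)) => p q /and3P[epq pS qS].
exact: sep_edge_inA (negbT (disjointFr Sxy pS)) (negbT (disjointFr Sxy qS)) epq.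
Qed.

Section Model.

Variable M : 'I_8 -> {set V}.
Hypothesis modelM : L_model e M.

Definition avoids_sep : pred 'I_8 := fun z => [disjoint M z & [set x; y]].

Lemma model_avoids_sep zx zy z :
  x \in M zx -> y \in M zy -> z != zx -> z != zy -> avoids_sep z.
Proof.
case: modelM => _ disjM _ xM yM zzx zzy.
rewrite /avoids_sep disjoint_sym disjoints_subset; apply/subsetP=> v.
by rewrite !inE => /orP[]/eqP->;
  rewrite ?(disjointFl (disjM _ _ zzx) xM) ?(disjointFl (disjM _ _ zzy) yM).
Qed.

Lemma model_adj_same_side z z' :
  avoids_sep z -> avoids_sep z' -> Ladj z z' -> same_side A (M z) (M z').
Proof.
case: modelM => connM _ adjM zxy z'xy /adjM[p [q [pM qM epq]]] a b aM bM.
have sideM := connected_sep_same_side (connM _).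
rewrite (sideM z zxy a p) // (sideM z' z'xy b q) //.
exact: sep_edge_inA (negbT (disjointFr zxy pM)) (negbT (disjointFr z'xy qM)) epq.
Qed.

Lemma model_connect_same_side z z' :
  avoids_sep z -> connect (Ladj_in avoids_sep) z z' -> same_side A (M z) (M z').
Proof.
case: modelM => connM _ _ zxy /connectP[p].
elim: p z zxy => [|z1 p IHp] z zxy /=; first by move=> _ ->; exact: connected_sep_same_side.
case/andP=> /and3P[_ z1xy adj] pth last_p.
apply: (same_side_trans (proj1 (connM z1))); first exact: model_adj_same_side.
exact: IHp.
Qed.

End Model.

End TwoSeparation.

Definition L_terminals : {set 'I_8} := [set Lv 1; Lv 3; Lv 4; Lv 5].

Lemma Ladj_sym : symmetric Ladj.
Proof. by move=> z z'; rewrite /Ladj orbC. Qed.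

Lemma Ladj_in_sym (P : pred 'I_8) : symmetric (Ladj_in P).
Proof. by move=> z z'; rewrite /Ladj_in /= Ladj_sym andbCA. Qed.

Lemma val_Lv i : 0 < i < 9 -> Lv i = i.-1 :> nat.
Proof. by case: i => // i; rewrite /Lv => /(@inordK 7). Qed.

Lemma L_terminal_to_hub (P : pred 'I_8) t :
  {in [predC L_terminals], forall z, P z} -> t \in L_terminals -> P t ->
  connect (Ladj_in P) t (Lv 7).
Proof.
move=> Pnt tT Pt.
have [P2 P6 P7] : [/\ P (Lv 2), P (Lv 6) & P (Lv 7)].
  by split; apply: Pnt; rewrite !inE -!val_eqE /= !val_Lv.
have step z z' : P z -> P z' -> Ladj z z' -> connect (Ladj_in P) z z'.
  by move=> Pz Pz' adj; apply: connect1; rewrite /Ladj_in /= Pz Pz'.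
move: tT; rewrite !inE -!orbA => /or4P[] /eqP tE; rewrite tE in Pt *.
- by apply: connect_trans (step _ (Lv 2) _ _ _) (step _ _ _ _ _); rewrite /Ladj ?val_Lv.
- by apply: connect_trans (step _ (Lv 2) _ _ _) (step _ _ _ _ _); rewrite /Ladj ?val_Lv.
- by apply: step; rewrite /Ladj ?val_Lv.
- by apply: connect_trans (step _ (Lv 6) _ _ _) (step _ _ _ _ _); rewrite /Ladj ?val_Lv.
Qed.

Lemma L_terminals_connected (P : pred 'I_8) s t :
  {in [predC L_terminals], forall z, P z} ->
  s \in L_terminals -> t \in L_terminals -> P s -> P t ->
  connect (Ladj_in P) s t.
Proof.
move=> Pnt sT tT Ps Pt; apply: connect_trans (L_terminal_to_hub Pnt sT Ps) _.
by rewrite (sym_connect_sym (Ladj_in_sym P)) L_terminal_to_hub.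
Qed.

Theorem mainTheorem19 (V : finType) (e : rel V) (A B : {set V})
    (x y : V) (X : {set V}) (u w : V) :
  simple_graph e ->
  two_separation e A B ->
  A :&: B = [set x; y] ->
  #|X| = 4 ->
  x \in X -> y \in X ->
  X :\: [set x; y] = [set u; w] ->
  u \in A :\: [set x; y] ->
  w \in B :\: [set x; y] ->
  ~ has_LX_minor e X.
Proof.
move=> [e_sym _] sepAB AIB _ xX yX XD /setDP[uA uxy] /setDP[wB wxy]
  [M [pi [modelM pi_inj piT MX]]].
have inX v : v \in [set u; w] -> v \in X by rewrite -XD => /setDP[].
have uX : u \in X by apply: inX; rewrite !inE eqxx.
have wX : w \in X by apply: inX; rewrite !inE eqxx orbT.
have avoidsM := model_avoids_sep modelM (MX x xX) (MX y yX).
have pi_avoids v : v \in X -> v \notin [set x; y] -> avoids_sep x y M (pi v).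
  move=> vX vxy; apply: avoidsM; apply: contraNneq vxy => /pi_inj-> //;
    by rewrite !inE eqxx ?orbT.
have nonterminal_avoids : {in [predC L_terminals], forall z, avoids_sep x y M z}.
  by move=> z; rewrite inE => zNT; apply: avoidsM; apply: contraNneq zNT => ->;
    exact: piT.
have := model_connect_same_side e_sym sepAB AIB modelM (pi_avoids u uX uxy)
  (L_terminals_connected nonterminal_avoids (piT u uX) (piT w wX)
    (pi_avoids u uX uxy) (pi_avoids w wX wxy)).
move=> /(_ u w (MX u uX) (MX w wX)).
by rewrite uA -[w \in A]negbK -(sep_inB sepAB AIB wxy) wB.
Qed.
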